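(* Let $n\ge 3$ and let $f\colon (0,4]\to\mathbb R$ be a differentiable, decreasing, and convex function. Then the vertices of a regular simplex inscribed in the unit sphere $\mathbb S^{n-2}\subset\mathbb R^{n-1}$ (i.e. $n$ points with $\langle \mathbf x_i,\mathbf x_j\rangle=-\frac{1}{n-1}$ for all $i\neq j$) attain the minimum of the largest eigenvalue $\lambda_n(L^{\mathbf x})$ of the graph Laplacian $L^{\mathbf x}$ over all configurations $\{\mathbf x_i\}_{i=1}^n$ of $n$ distinct points on $\mathbb S^{n-2}$.
   Context: For points $\mathbf x_1,\dots,\mathbf x_n\in\mathbb S^{n-2}$, the weighted adjacency matrix $W^{\mathbf x}$ is the $n\times n$ matrix with $W^{\mathbf x}_{ij}=f(|\mathbf x_i-\mathbf x_j|^2)$ for $i\ne j$ (Euclidean distance) and $W^{\mathbf x}_{ii}=0$. Let $D^{\mathbf x}$ be diagonal with $D^{\mathbf x}_{ii}=\sum_j W^{\mathbf x}_{ij}$; the graph Laplacian is $L^{\mathbf x}=D^{\mathbf x}-W^{\mathbf x}$, with eigenvalues $\lambda_1(L^{\mathbf x})\le\dots\le\lambda_n(L^{\mathbf x})$, so $\lambda_n(L^{\mathbf x})=\max_{\|v\|=1}\langle v,L^{\mathbf x}v\rangle$. *)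

From HB Require Import structures.
From mathcomp Require Import all_boot all_order all_algebra.
From mathcomp Require Import all_classical all_reals all_analysis.
Set Implicit Arguments. Unset Strict Implicit. Unset Printing Implicit Defensive.
Import Order.TTheory GRing.Theory Num.Theory.
Import numFieldNormedType.Exports.
Local Open Scope classical_set_scope.
Local Open Scope ring_scope.

Definition dotv (R : realType) (d : nat) (u v : 'rV[R]_d) : R :=
  \sum_(k < d) u 0 k * v 0 k.

Definition dist2 (R : realType) (d : nat) (u v : 'rV[R]_d) : R :=
  dotv (u - v) (u - v).

Definition adjW (R : realType) (n d : nat) (f : R -> R) (x : 'I_n -> 'rV[R]_d)
  : 'M[R]_n :=
  \matrix_(i, j) (if i == j then 0 else f (dist2 (x i) (x j))).

Definition laplacian (R : realType) (n d : nat) (f : R -> R)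
  (x : 'I_n -> 'rV[R]_d) : 'M[R]_n :=
  \matrix_(i, j) ((i == j)%:R * (\sum_(k < n) adjW f x i k)) - adjW f x.

Definition lambda_max (R : realType) (n : nat) (M : 'M[R]_n) : R :=
  sup [set a : R | eigenvalue M a].

From HB Require Import structures.
From mathcomp Require Import all_boot all_order all_algebra.
From mathcomp Require Import all_classical all_reals all_analysis.
From mathcomp Require Import ring lra.
Set Implicit Arguments. Unset Strict Implicit. Unset Printing Implicit Defensive.
Import Order.TTheory GRing.Theory Num.Theory.
Import numFieldNormedType.Exports.
Local Open Scope classical_set_scope.
Local Open Scope ring_scope.

(* For a symmetric matrix, [lambda_max] is the supremum of the Rayleigh quotient.
   The Laplacian of the regular simplex is [(n c) I - c J] with
   [c = f (2 n / (n - 1))], so its largest eigenvalue is at most [max (n c) 0].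
   The Laplacian of any configuration [x] has zero row sums, so its largest
   eigenvalue [l] is nonnegative, and testing its quadratic form on the vectors
   [e_a - e_b] gives [tr L <= (n - 1) l]. The trace is the sum of [f] over the
   [n (n - 1)] squared distances [|x_a - x_b|^2], whose mean is at most
   [2 n / (n - 1)] because [|x_1 + ... + x_n|^2 >= 0]; Jensen's inequality and
   the monotonicity of [f] give [tr L >= n (n - 1) c], hence [l >= n c]. *)

Section Euclidean.
Variables (R : realType) (d : nat).
Implicit Types u v : 'rV[R]_d.

Lemma dotvC u v : dotv u v = dotv v u.
Proof. by apply: eq_bigr => k _; rewrite mulrC. Qed.

Lemma dotv_mulmx u v : dotv u v = (u *m v^T) 0 0.
Proof. by rewrite mxE; apply: eq_bigr => k _; rewrite mxE. Qed.

Lemma sqr_le_dotv u k : u 0 k ^+ 2 <= dotv u u.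
Proof.
rewrite /dotv (bigD1 k) //= -expr2 lerDl.
by apply: sumr_ge0 => i _; rewrite -expr2 sqr_ge0.
Qed.

Lemma dotv_ge0 u : 0 <= dotv u u.
Proof. by apply: sumr_ge0 => k _; rewrite -expr2 sqr_ge0. Qed.

Lemma dotv_gt0 u : u != 0 -> 0 < dotv u u.
Proof.
move=> u0; rewrite lt_def dotv_ge0 andbT; apply: contra u0 => /eqP u_0.
apply/eqP/matrixP => i k; rewrite (ord1 i) mxE.
by apply/eqP; rewrite -sqrf_eq0 eq_le sqr_ge0 andbT -u_0 sqr_le_dotv.
Qed.

Lemma normr_mul_le_dotv u i j : `|u 0 i| * `|u 0 j| <= dotv u u.
Proof.
have := sqr_le_dotv u i; rewrite -(real_normK (num_real (u 0 i))).
have := sqr_le_dotv u j; rewrite -(real_normK (num_real (u 0 j))).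
have := sqr_ge0 (`|u 0 i| - `|u 0 j|); rewrite sqrrB.
by lra.
Qed.

Lemma dotv_const1 : dotv (const_mx 1 : 'rV[R]_d) (const_mx 1) = d%:R.
Proof.
rewrite /dotv (eq_bigr (fun=> 1)) ?sumr_const ?card_ord // => k _.
by rewrite mxE mulr1.
Qed.

Lemma dist2E u v : dist2 u v = dotv u u - 2 * dotv u v + dotv v v.
Proof.
rewrite /dist2 /dotv mulr_sumr -sumrB -big_split /=; apply: eq_bigr => k _.
by rewrite !mxE; ring.
Qed.

Lemma dist2C u v : dist2 u v = dist2 v u.
Proof. by rewrite !dist2E (dotvC v u); ring. Qed.

Lemma dist2xx u : dist2 u u = 0.
Proof. by rewrite dist2E; ring. Qed.

Lemma dist2_gt0 u v : u != v -> 0 < dist2 u v.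
Proof. by rewrite -subr_eq0; apply: dotv_gt0. Qed.

Lemma dist2_sphere_le4 u v : dotv u u = 1 -> dotv v v = 1 -> dist2 u v <= 4.
Proof.
move=> u1 v1; have := dotv_ge0 (u + v).
have -> : dotv (u + v) (u + v) = dotv u u + 2 * dotv u v + dotv v v.
  rewrite /dotv mulr_sumr -!big_split /=; apply: eq_bigr => k _.
  by rewrite !mxE; ring.
by rewrite dist2E u1 v1; lra.
Qed.

Lemma sum_dist2_sphere_le n (x : 'I_n -> 'rV[R]_d) :
  (forall i, dotv (x i) (x i) = 1) ->
  \sum_i \sum_j dist2 (x i) (x j) <= 2 * n%:R ^+ 2.
Proof.
move=> x1.
have gram : \sum_i \sum_j dotv (x i) (x j) = dotv (\sum_i x i) (\sum_i x i).
  rewrite /dotv; under [RHS]eq_bigr do rewrite !summxE mulr_suml.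
  rewrite [RHS]exchange_big; apply: eq_bigr => i _.
  rewrite exchange_big; apply: eq_bigr => k _; rewrite mulr_sumr.
  by apply: eq_bigr => j _.
have expand i : \sum_j dist2 (x i) (x j) = 2 * n%:R - 2 * \sum_j dotv (x i) (x j).
  transitivity (\sum_j (2 - 2 * dotv (x i) (x j))).
    by apply: eq_bigr => j _; rewrite dist2E !x1; ring.
  by rewrite sumrB sumr_const card_ord -mulr_sumr mulr_natr.
rewrite (eq_bigr _ (fun i _ => expand i)).
rewrite sumrB sumr_const card_ord -mulr_sumr gram mulr_natr.
by have := dotv_ge0 (\sum_i x i); lra.
Qed.

End Euclidean.

Section QuadraticForm.
Variables (R : realType) (n : nat).
Implicit Types (M N B : 'M[R]_n) (u v w : 'rV[R]_n).

Definition qform M u v := (u *m M *m v^T) 0 0.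

Lemma qformE M u v : qform M u v = \sum_i \sum_j u 0 i * M i j * v 0 j.
Proof.
rewrite /qform mxE exchange_big; apply: eq_bigr => j _.
by rewrite !mxE mulr_suml; apply: eq_bigr => i _.
Qed.

Lemma qform1 u v : qform 1%:M u v = dotv u v.
Proof. by rewrite /qform mulmx1 dotv_mulmx. Qed.

Lemma qform_tr M u v : qform M^T u v = qform M v u.
Proof.
have tr11 (A : 'M[R]_1) : A 0 0 = A^T 0 0 by rewrite mxE.
by rewrite /qform [RHS]tr11 !trmx_mul trmxK mulmxA.
Qed.

Lemma qformBl M u v w : qform M (u - v) w = qform M u w - qform M v w.
Proof. by rewrite /qform !mulmxBl !mxE. Qed.

Lemma qformBr M u v w : qform M w (u - v) = qform M w u - qform M w v.
Proof. by rewrite /qform linearB /= mulmxBr !mxE. Qed.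

Lemma qformZl M a u w : qform M (a *: u) w = a * qform M u w.
Proof. by rewrite /qform -!scalemxAl mxE. Qed.

Lemma qformZr M a u w : qform M w (a *: u) = a * qform M w u.
Proof. by rewrite /qform linearZ /= -scalemxAr mxE. Qed.

Lemma qform_mxB M N u v : qform (M - N) u v = qform M u v - qform N u v.
Proof. by rewrite /qform mulmxBr mulmxBl !mxE. Qed.

Lemma qform_scalar a u : qform a%:M u u = a * dotv u u.
Proof. by rewrite /qform mul_mx_scalar -scalemxAl mxE dotv_mulmx. Qed.

Lemma qform_delta M a b : qform M 'e_a 'e_b = M a b.
Proof. by rewrite /qform -rowE trmx_delta -colE !mxE. Qed.

Lemma quad_ge0_discr (a b c : R) : 0 <= c ->
  (forall t, 0 <= a - 2 * t * b + t ^+ 2 * c) -> b ^+ 2 <= a * c.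
Proof.
rewrite le_eqVlt => /orP [/eqP c0 | c_gt0] quad_ge0.
  rewrite -c0 mulr0; have [->|b0] := eqVneq b 0; first by rewrite expr0n.
  have := quad_ge0 ((a + 1) / (2 * b)).
  have -> : 2 * ((a + 1) / (2 * b)) * b = a + 1 by field.
  by rewrite -c0; lra.
have := quad_ge0 (b / c).
have -> : a - 2 * (b / c) * b + (b / c) ^+ 2 * c = a - b ^+ 2 / c.
  by field; rewrite gt_eqF.
by rewrite subr_ge0 ler_pdivrMr // mulrC.
Qed.

Lemma qform_CauchySchwarz N u v : N^T = N -> (forall w, 0 <= qform N w w) ->
  qform N u v ^+ 2 <= qform N u u * qform N v v.
Proof.
move=> Nsym N_psd; apply: quad_ge0_discr (N_psd v) _ => t.
have := N_psd (u - t *: v).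
rewrite qformBl !qformBr !qformZl !qformZr -[qform N v u]qform_tr Nsym.
by move=> ?; lra.
Qed.

(* With [w := u B^T] we get [qform N v w = <v, u>] and [qform N w w = qform B u u]. *)
Lemma dotv_sqr_le_qform_inv N B u : N^T = N -> (forall w, 0 <= qform N w w) ->
  N *m B = 1%:M -> dotv u u ^+ 2 <= qform N u u * qform B u u.
Proof.
move=> Nsym N_psd NB; set w := u *m B^T.
have Nw v : qform N v w = dotv v u.
  by rewrite /qform trmx_mul trmxK -mulmxA [N *m _]mulmxA NB mul1mx dotv_mulmx.
have Nww : qform N w w = qform B u u.
  by rewrite Nw dotv_mulmx -qform_tr.
by have := qform_CauchySchwarz u w Nsym N_psd; rewrite Nw Nww.
Qed.

Lemma qform_le_abs_sum M u : qform M u u <= (\sum_i \sum_j `|M i j|) * dotv u u.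
Proof.
rewrite qformE mulr_suml; apply: ler_sum => i _; rewrite mulr_suml.
apply: ler_sum => j _; apply: le_trans (ler_norm _) _.
by rewrite !normrM mulrAC mulrC ler_wpM2l ?normr_mul_le_dotv.
Qed.

Lemma qform_const c u : qform (const_mx c) u u = c * (\sum_i u 0 i) ^+ 2.
Proof.
rewrite qformE expr2 mulr_suml mulr_sumr; apply: eq_bigr => i _.
by rewrite !mulr_sumr; apply: eq_bigr => j _; rewrite mxE; ring.
Qed.

Lemma sqr_sum_le_dotv u : (\sum_i u 0 i) ^+ 2 <= n%:R * dotv u u.
Proof.
pose one : 'rV[R]_n := const_mx 1.
have psd1 w : 0 <= qform 1%:M w w by rewrite qform1 dotv_ge0.
have := qform_CauchySchwarz u one (trmx1 _ _) psd1.
rewrite !qform1 mulrC; congr (_ ^+ _ <= _ * _).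
- by apply: eq_bigr => i _; rewrite mxE mulr1.
- exact: dotv_const1.
Qed.

End QuadraticForm.

Section Rayleigh.
Variables (R : realType) (n : nat) (M : 'M[R]_n).
Hypothesis n_gt0 : (0 < n)%N.

Definition rayleigh_set :=
  [set qform M u u / dotv u u | u in [set u : 'rV[R]_n | u != 0]].

Definition rayleigh_max := sup rayleigh_set.

Lemma rayleigh_set_ubound : ubound rayleigh_set (\sum_i \sum_j `|M i j|).
Proof. by move=> _ [u u0 <-]; rewrite ler_pdivrMr ?dotv_gt0 ?qform_le_abs_sum. Qed.

Lemma rayleigh_set_neq0 : rayleigh_set !=set0.
Proof.
pose one : 'rV[R]_n := const_mx 1.
have one_neq0 : one != 0.
  apply/eqP => /matrixP /(_ 0 (Ordinal n_gt0)) /eqP.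
  by rewrite !mxE oner_eq0.
by exists (qform M one one / dotv one one), one.
Qed.

Lemma rayleigh_le_max u : u != 0 -> qform M u u / dotv u u <= rayleigh_max.
Proof.
move=> u0; apply: ub_le_sup; last by exists u.
by exists (\sum_i \sum_j `|M i j|); exact: rayleigh_set_ubound.
Qed.

Lemma qform_le_rayleigh_max u : qform M u u <= rayleigh_max * dotv u u.
Proof.
have [->|u0] := eqVneq u 0.
  by rewrite /qform dotv_mulmx !mul0mx !mxE mulr0.
by rewrite -ler_pdivrMr ?dotv_gt0 ?rayleigh_le_max.
Qed.

Lemma eigenvalue_le_rayleigh_max a : eigenvalue M a -> a <= rayleigh_max.
Proof.
move=> /eigenvalueP [v vM v0]; apply: le_trans (rayleigh_le_max v0).
by rewrite /qform vM -scalemxAl mxE -dotv_mulmx mulfK // gt_eqF ?dotv_gt0.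
Qed.

Hypothesis M_sym : M^T = M.

(* If [S%:M - M] were invertible, the Cauchy-Schwarz bound for the positive
   semidefinite form it defines would push every Rayleigh quotient a fixed
   distance below their supremum [S]. *)
Lemma rayleigh_max_eigenvalue : eigenvalue M rayleigh_max.
Proof.
set S := rayleigh_max; apply: contraT => notEig.
have unitA : M - S%:M \in unitmx.
  by move: notEig; rewrite /eigenvalue /eigenspace negbK kermx_eq0 row_free_unit.
set N := S%:M - M; set B := - invmx (M - S%:M).
have NB : N *m B = 1%:M by rewrite mulmxN -mulNmx opprB mulmxV.
have N_sym : N^T = N by rewrite linearB /= tr_scalar_mx M_sym.
have N_psd w : 0 <= qform N w w.
  by rewrite qform_mxB qform_scalar subr_ge0 qform_le_rayleigh_max.
set K := \sum_i \sum_j `|B i j|.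
have K_ge0 : 0 <= K by rewrite sumr_ge0 // => i _; rewrite sumr_ge0.
have gap : ubound rayleigh_set (S - (K + 1)^-1).
  move=> _ [u u0 <-]; have s_gt0 := dotv_gt0 u0.
  have := dotv_sqr_le_qform_inv u N_sym N_psd NB.
  rewrite qform_mxB qform_scalar -/S.
  have := qform_le_rayleigh_max u; rewrite -/S -subr_ge0.
  have := qform_le_abs_sum B u; rewrite -/K.
  set s := dotv u u; set X := S * s - qform M u u => qB_le X_ge0 s2_le.
  have s_le : s <= X * K.
    rewrite -(ler_pM2l s_gt0) -expr2 mulrCA; apply: le_trans s2_le _.
    by rewrite ler_wpM2l // mulrC.
  have X_bound : s / (K + 1) <= X by rewrite ler_pdivrMr ?mulrDr ?mulr1; lra.
  by rewrite ler_pdivrMr // mulrBl [_^-1 * s]mulrC; move: X_bound; rewrite /X; lra.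
have : 0 < (K + 1)^-1 by rewrite invr_gt0; lra.
have : S <= S - (K + 1)^-1 := ge_sup rayleigh_set_neq0 gap.
lra.
Qed.

Lemma lambda_max_rayleigh : lambda_max M = rayleigh_max.
Proof.
apply/le_anti/andP; split.
  apply: ge_sup => [|a]; first by exists rayleigh_max; exact: rayleigh_max_eigenvalue.
  exact: eigenvalue_le_rayleigh_max.
apply: ub_le_sup; last exact: rayleigh_max_eigenvalue.
by exists rayleigh_max => a; exact: eigenvalue_le_rayleigh_max.
Qed.

End Rayleigh.

Lemma sum_neq_const (R : nmodType) n (a : 'I_n) (c : R) :
  \sum_(b | a != b) c = c *+ n.-1.
Proof.
rewrite sumr_const -[n in n.-1]card_ord -(cardC1 a).
by congr (_ *+ _); apply: eq_card => b; rewrite !inE eq_sym.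
Qed.

Lemma natr_pred (R : pzSemiRingType) n : (0 < n)%N -> n%:R = n.-1%:R + 1 :> R.
Proof. by move=> n_gt0; rewrite natr1 prednK. Qed.

Section LambdaMax.
Variables (R : realType) (n : nat) (M : 'M[R]_n).
Hypotheses (n_gt0 : (0 < n)%N) (M_sym : M^T = M).

Lemma qform_le_lambda_max u : qform M u u <= lambda_max M * dotv u u.
Proof. by rewrite lambda_max_rayleigh // qform_le_rayleigh_max. Qed.

Lemma lambda_max_le c : (forall u, qform M u u <= c * dotv u u) -> lambda_max M <= c.
Proof.
move=> qc; rewrite lambda_max_rayleigh //; apply: ge_sup (rayleigh_set_neq0 _ n_gt0) _.
by move=> _ [u u0 <-]; rewrite ler_pdivrMr ?dotv_gt0.
Qed.

Hypothesis M_row0 : forall i, \sum_j M i j = 0.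

Lemma lambda_max_ge0 : 0 <= lambda_max M.
Proof.
pose one : 'rV[R]_n := const_mx 1.
have := qform_le_lambda_max one.
have -> : qform M one one = 0.
  rewrite qformE big1 // => i _; rewrite -[RHS](M_row0 i).
  by apply: eq_bigr => j _; rewrite !mxE mulr1 mul1r.
by rewrite dotv_const1 pmulr_lge0 // ltr0n.
Qed.

Lemma mxtrace_le_lambda_max : \tr M <= n.-1%:R * lambda_max M.
Proof.
have Msym a b : M b a = M a b by rewrite -[in LHS]M_sym mxE.
have pair a b : a != b -> M a a + M b b - 2 * M a b <= 2 * lambda_max M.
  move=> ab; have := qform_le_lambda_max ('e_a - 'e_b).
  rewrite -qform1 !qformBl !qformBr !qform_delta !mxE !eqxx (negbTE ab) eq_sym.
  by rewrite (negbTE ab) (Msym a b) /=; lra.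
have : \sum_(a : 'I_n) \sum_(b | a != b) (M a a + M b b - 2 * M a b)
    <= \sum_(a : 'I_n) \sum_(b | a != b) (2 * lambda_max M).
  by apply: ler_sum => a _; apply: ler_sum => b; exact: pair.
have inner_sum (a : 'I_n) : \sum_(b | a != b) (M a a + M b b - 2 * M a b)
    = n%:R * M a a + \tr M.
  transitivity (\sum_b (M a a + M b b - 2 * M a b)).
    rewrite big_mkcond; apply: eq_bigr => b _.
    by case: (eqVneq a b) => [<-|//]; ring.
  rewrite sumrB big_split /= sumr_const card_ord -mulr_sumr M_row0.
  by rewrite mulr0 subr0 mulr_natl.
have lhs : \sum_(a : 'I_n) (n%:R * M a a + \tr M) = 2 * (n%:R * \tr M).
  rewrite big_split /= -mulr_sumr sumr_const card_ord -/(\tr M).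
  by rewrite -mulr_natl; ring.
have rhs : \sum_(a : 'I_n) \sum_(b | a != b) (2 * lambda_max M)
    = 2 * (n%:R * (n.-1%:R * lambda_max M)).
  under eq_bigr do rewrite sum_neq_const.
  by rewrite sumr_const card_ord -mulr_natl -[_ *+ n.-1]mulr_natl; ring.
rewrite (eq_bigr _ (fun a _ => inner_sum a)) lhs rhs ler_pM2l //.
by rewrite ler_pM2l ?ltr0n.
Qed.

End LambdaMax.

Section Laplacian.
Variables (R : realType) (n d : nat) (f : R -> R) (z : 'I_n -> 'rV[R]_d).

Lemma laplacianE i j : laplacian f z i j =
  if i == j then \sum_(k | i != k) f (dist2 (z i) (z k))
  else - f (dist2 (z i) (z j)).
Proof.
rewrite !mxE; case: (eqVneq i j) => [_|_] /=; last by rewrite mul0r sub0r.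
rewrite mul1r subr0 [RHS]big_mkcond; apply: eq_bigr => k _.
by rewrite mxE; case: eqVneq.
Qed.

Lemma laplacian_tr : (laplacian f z)^T = laplacian f z.
Proof.
apply/matrixP => i j; rewrite mxE !laplacianE eq_sym.
by case: eqVneq => [->|_] //; rewrite dist2C.
Qed.

Lemma laplacian_row0 i : \sum_j laplacian f z i j = 0.
Proof.
rewrite (bigD1 i) //= laplacianE eqxx.
under eq_bigr => j ji do rewrite laplacianE eq_sym (negbTE ji).
by rewrite sumrN [X in _ - X](eq_bigl (fun j => i != j)) ?subrr // => j; rewrite eq_sym.
Qed.

Lemma laplacian_equidistant t : (forall i j, i != j -> dist2 (z i) (z j) = t) ->
  laplacian f z = (n%:R * f t)%:M - const_mx (f t).
Proof.
move=> zt; apply/matrixP => i j; rewrite laplacianE !mxE.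
case: (eqVneq i j) => [_|ij] /=; last by rewrite zt // mulr0n sub0r.
rewrite (eq_bigr (fun=> f t)) => [|k ik]; last by rewrite zt.
rewrite sum_neq_const -mulr_natl mulr1n.
by rewrite (natr_pred _ (leq_ltn_trans (leq0n i) (ltn_ord i))); ring.
Qed.

Lemma lambda_max_laplacian_equidistant t : (0 < n)%N ->
  (forall i j, i != j -> dist2 (z i) (z j) = t) ->
  lambda_max (laplacian f z) <= Num.max (n%:R * f t) 0.
Proof.
move=> n_gt0 zt; apply: (lambda_max_le n_gt0 laplacian_tr) => u.
rewrite (laplacian_equidistant zt) qform_mxB qform_scalar qform_const.
have := sqr_sum_le_dotv u; have := dotv_ge0 u; have := sqr_ge0 (\sum_i u 0 i).
set S := (\sum_i u 0 i) ^+ 2; set s := dotv u u => S_ge0 s_ge0 S_le.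
have [c_ge0|c_lt0] := lerP 0 (f t).
  have : n%:R * f t * s <= Num.max (n%:R * f t) 0 * s.
    by rewrite ler_wpM2r // le_max lexx.
  by have := mulr_ge0 c_ge0 S_ge0; lra.
have : 0 <= Num.max (n%:R * f t) 0 * s by rewrite mulr_ge0 // le_max lexx orbT.
have : f t * (n%:R * s - S) <= 0 by rewrite mulr_le0_ge0 ?subr_ge0 // ltW.
lra.
Qed.

End Laplacian.

Lemma itv_oc_convex (R : realFieldType) (a b s t l : R) :
  s \in `]a, b] -> t \in `]a, b] -> 0 <= l <= 1 -> l * s + (1 - l) * t \in `]a, b].
Proof.
rewrite !in_itv /= => /andP [as_ sb] /andP [at_ tb] /andP [l0 l1].
have up : 0 <= l * (b - s) + (1 - l) * (b - t).
  by rewrite addr_ge0 // mulr_ge0 //; lra.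
have low : 0 < l * (s - a) + (1 - l) * (t - a).
  case: (lerP s t) => st.
    have : 0 <= (1 - l) * (t - s) by rewrite mulr_ge0 //; lra.
    by lra.
  have : 0 <= l * (s - t) by rewrite mulr_ge0 //; lra.
  by lra.
by apply/andP; split; lra.
Qed.

Section Jensen.
Variables (R : realType) (D : {pred R}) (f : R -> R).
Hypothesis D_convex : forall s t l, s \in D -> t \in D -> 0 <= l <= 1 ->
  l * s + (1 - l) * t \in D.
Hypothesis f_convex : forall s t l, s \in D -> t \in D -> 0 <= l <= 1 ->
  f (l * s + (1 - l) * t) <= l * f s + (1 - l) * f t.

Definition mean (s : seq R) := (\sum_(a <- s) a) / (size s)%:R.

Lemma jensen_seq (s : seq R) : s != [::] -> {subset s <= D} ->
  mean s \in D /\ (size s)%:R * f (mean s) <= \sum_(a <- s) f a.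
Proof.
elim: s => [//|a s IH] _ sD; have aD := sD a (mem_head a s).
have [->|s0] := eqVneq s [::].
  by rewrite /mean !big_cons !big_nil /= !addr0 divr1 mul1r.
have [mD jen] := IH s0 (fun b bs => sD b (mem_behead (s := a :: s) bs)).
set K := (size s)%:R in jen; have K_gt0 : 0 < K by rewrite ltr0n lt0n size_eq0.
set l := (K + 1)^-1.
have l01 : 0 <= l <= 1 by rewrite invr_ge0 invf_le1 ?ler_addr; lra.
have sizeE : (size (a :: s))%:R = K + 1 by rewrite /= -natr1.
have meanE : mean (a :: s) = l * a + (1 - l) * mean s.
  rewrite /mean big_cons sizeE -/K /l; field.
  by apply/andP; split; rewrite gt_eqF //; lra.
rewrite meanE; split; first exact: D_convex.
rewrite sizeE big_cons; apply: le_trans (ler_wpM2l _ (f_convex aD mD l01)) _.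
  by lra.
have -> : (K + 1) * (l * f a + (1 - l) * f (mean s)) = f a + K * f (mean s).
  by rewrite /l; field; rewrite gt_eqF //; lra.
by rewrite lerD2l.
Qed.

Lemma jensen (I : finType) (P : {pred I}) (g : I -> R) :
  (0 < #|P|)%N -> (forall i, i \in P -> g i \in D) ->
  (\sum_(i in P) g i) / #|P|%:R \in D /\
  #|P|%:R * f ((\sum_(i in P) g i) / #|P|%:R) <= \sum_(i in P) f (g i).
Proof.
move=> P_gt0 gD; set s := [seq g i | i <- enum P].
have sizeE : size s = #|P| by rewrite size_map cardE.
have s0 : s != [::] by rewrite -size_eq0 sizeE -lt0n.
have sD : {subset s <= D} by move=> _ /mapP [i iP ->]; apply: gD; rewrite -mem_enum.
have [] := jensen_seq s0 sD.
by rewrite /mean sizeE /s !big_map !big_enum.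
Qed.

End Jensen.

Section LaplacianSphere.
Variables (R : realType) (n d : nat) (f : R -> R) (x : 'I_n -> 'rV[R]_d).
Hypotheses (n_gt1 : (1 < n)%N)
  (f_decr : {in `]0, 4] &, forall s t, s <= t -> f t <= f s})
  (f_convex : forall s t l, s \in `]0, 4] -> t \in `]0, 4] -> 0 <= l <= 1 ->
     f (l * s + (1 - l) * t) <= l * f s + (1 - l) * f t)
  (x_unit : forall i, dotv (x i) (x i) = 1) (x_inj : injective x).

Lemma mxtrace_laplacian_sphere_ge :
  (n * n.-1)%:R * f (2 * n%:R / n.-1%:R) <= \tr (laplacian f x).
Proof.
set P := [pred p : 'I_n * 'I_n | p.1 != p.2]; set t := 2 * n%:R / n.-1%:R.
have m_gt0 : 0 < n.-1%:R :> R by rewrite ltr0n -ltnS prednK // ltnW.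
have cardP : #|P|%:R = (n * n.-1)%:R :> R.
  transitivity (\sum_(a : 'I_n) \sum_(b | a != b) (1 : R)).
    by rewrite pair_big_dep sumr_const; congr (_ *+ _); apply: eq_card.
  under eq_bigr do rewrite sum_neq_const.
  by rewrite sumr_const card_ord -mulrnA mulnC.
have P_gt0 : (0 < #|P|)%N by rewrite -(ltr0n R) cardP natrM mulr_gt0 // ltr0n ltnW.
have sumP (F : 'I_n -> 'I_n -> R) :
    \sum_(p in P) F p.1 p.2 = \sum_a \sum_(b | a != b) F a b.
  by rewrite pair_big_dep; apply: eq_bigl.
have x_dist p : p \in P -> dist2 (x p.1) (x p.2) \in `]0, 4].
  by move=> p12; rewrite in_itv /= dist2_gt0 ?dist2_sphere_le4 // (inj_eq x_inj).
have [mean_in jen] := jensen (D := [pred s | s \in `]0, 4]]) (@itv_oc_convex _ _ _)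
  f_convex P_gt0 x_dist.
have trE : \tr (laplacian f x) = \sum_(p in P) f (dist2 (x p.1) (x p.2)).
  rewrite (sumP (fun a b => f (dist2 (x a) (x b)))).
  by apply: eq_bigr => a _; rewrite laplacianE eqxx.
rewrite trE; apply: le_trans jen; rewrite -cardP ler_wpM2l ?ler0n //.
apply: f_decr => //.
  have m_ge1 : 1 <= n.-1%:R :> R by rewrite ler1n -ltnS prednK // ltnW.
  rewrite in_itv /= /t (natr_pred _ (ltnW n_gt1)).
  by rewrite divr_gt0 ?ler_pdivrMr //=; lra.
rewrite ler_pdivrMr ?ltr0n // cardP (sumP (fun a b => dist2 (x a) (x b))).
have -> : \sum_a \sum_(b | a != b) dist2 (x a) (x b) = \sum_a \sum_b dist2 (x a) (x b).
  apply: eq_bigr => a _; rewrite [RHS](bigD1 a) //= dist2xx add0r.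
  by apply: eq_bigl => b; rewrite eq_sym.
apply: le_trans (sum_dist2_sphere_le x_unit) _.
by rewrite /t natrM le_eqVlt; apply/orP; left; apply/eqP; field; rewrite gt_eqF.
Qed.

Lemma lambda_max_laplacian_sphere_ge :
  n%:R * f (2 * n%:R / n.-1%:R) <= lambda_max (laplacian f x).
Proof.
have n_gt0 : (0 < n)%N by apply: ltnW.
have m_gt0 : 0 < n.-1%:R :> R by rewrite ltr0n -ltnS prednK.
have := le_trans mxtrace_laplacian_sphere_ge
  (mxtrace_le_lambda_max n_gt0 (laplacian_tr f x) (laplacian_row0 f x)).
by rewrite natrM mulrAC [n.-1%:R * _]mulrC ler_pM2r.
Qed.

End LaplacianSphere.

Theorem proposition3p3 (R : realType) (n : nat) (f : R -> R) :
  (3 <= n)%N ->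
  (* f differentiable on (0,4]: derivable on (0,4), left-differentiable at 4 *)
  {in `]0, 4[, forall t, derivable f t 1} ->
  cvg ((fun h : R => h^-1 * (f (4 + h) - f 4)) @ 0^'-) ->
  (* f decreasing on (0,4] *)
  {in `]0, 4] &, forall s t, s <= t -> f t <= f s} ->
  (* f convex on (0,4] *)
  (forall s t l, s \in `]0, 4] -> t \in `]0, 4] -> 0 <= l <= 1 ->
     f (l * s + (1 - l) * t) <= l * f s + (1 - l) * f t) ->
  forall y : 'I_n -> 'rV[R]_n.-1,
  (* y: vertices of a regular simplex inscribed in S^{n-2} *)
  (forall i, dotv (y i) (y i) = 1) ->
  (forall i j, i != j -> dotv (y i) (y j) = - (n.-1%:R)^-1) ->
  forall x : 'I_n -> 'rV[R]_n.-1,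
  (* x: n distinct points on S^{n-2} *)
  (forall i, dotv (x i) (x i) = 1) ->
  injective x ->
  lambda_max (laplacian f y) <= lambda_max (laplacian f x).
Proof.
move=> n_ge3 _ _ f_decr f_convex y y_unit y_simplex x x_unit x_inj.
have n_gt1 : (1 < n)%N by apply: leq_trans n_ge3.
have n_gt0 : (0 < n)%N by apply: ltnW.
have y_dist i j : i != j -> dist2 (y i) (y j) = 2 * n%:R / n.-1%:R.
  move=> ij; rewrite dist2E !y_unit y_simplex // (natr_pred _ n_gt0).
  by field; rewrite pnatr_eq0 -lt0n -ltnS prednK.
apply: le_trans (lambda_max_laplacian_equidistant f n_gt0 y_dist) _.
rewrite ge_max lambda_max_laplacian_sphere_ge //=.
exact: lambda_max_ge0 n_gt0 (laplacian_tr f x) (laplacian_row0 f x).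
Qed.
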